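(* Let $(\mathcal E,B,\mathcal L_{\mathcal P})$ be an epistemic space with $|\mathcal P|\ge 2$, let $\mathcal S$ be a set of agents, and let $\nabla$ be an ES basic fusion operator. If $\nabla$ satisfies (ESF-SD), (ESF-P) and (ESF-I), then $\nabla$ satisfies (ESF-D).
   Context: $\mathcal L_{\mathcal P}$ is the set of propositional formulas over a finite set $\mathcal P$ of variables, $\mathcal W_{\mathcal P}$ its set of valuations (interpretations), and $[\![\phi]\!]$ the set of models of $\phi$. For a nonempty set $M$ of valuations, $\varphi_M$ denotes a formula with $[\![\varphi_M]\!]=M$ (written $\varphi_w$, $\varphi_{w,w'}$, etc.). An epistemic space is a triple $(\mathcal E,B,\mathcal L_{\mathcal P})$ with $\mathcal E$ a nonempty set (of epistemic states) and $B:\mathcal E\to\mathcal L_{\mathcal P}$ a function whose image modulo logical equivalence is exactly the set of consistent formulas modulo equivalence. Agents form a well-ordered set $(\mathcal S,<)$; a society is a nonempty finite $N\subseteq\mathcal S$; an $N$-profile is a function $\Phi:N\to\mathcal E$, with $E_i:=\Phi(i)$; for $N=\{i\}$ the profile is identified with $E_i$ (an $i$-profile). Profiles $\Phi$ on $N=\{i_1<\dots<i_n\}$ and $\Psi$ on $M=\{j_1<\dots<j_m\}$ are equivalent, $\Phi\equiv\Psi$, if $n=m$ and $\Phi(i_k)=\Psi(j_k)$ for all $k$. An ES combination operator $\nabla$ assigns to every profile $\Phi$ (of any society) and every $E\in\mathcal E$ an epistemic state $\nabla(\Phi,E)\in\mathcal E$. It is an ES basic fusion operator if for all profiles $\Phi,\Phi'$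 and $E,E',E''\in\mathcal E$: (ESF1) $B(\nabla(\Phi,E))\vdash B(E)$; (ESF2) if $\Phi\equiv\Phi'$ and $B(E)\equiv B(E')$ then $B(\nabla(\Phi,E))\equiv B(\nabla(\Phi',E'))$; (ESF3) if $B(E)\equiv B(E')\wedge B(E'')$ then $B(\nabla(\Phi,E'))\wedge B(E'')\vdash B(\nabla(\Phi,E))$; (ESF4) if $B(E)\equiv B(E')\wedge B(E'')$ and $B(\nabla(\Phi,E'))\wedge B(E'')\nvdash\bot$ then $B(\nabla(\Phi,E))\vdash B(\nabla(\Phi,E'))\wedge B(E'')$. Social postulates: (ESF-SD) for every agent $i$, every three interpretations $w,w',w''$ and every $E_{w,w'},E_{w',w''}\in\mathcal E$ with $[\![B(E_{w,w'})]\!]=\{w,w'\}$, $[\![B(E_{w',w''})]\!]=\{w',w''\}$, each of the following four pairs of conditions is realised by some $i$-profile $E_i$: (i) $B(\nabla(E_i,E_{w,w'}))\equiv\varphi_{w,w'}$ and $B(\nabla(E_i,E_{w',w''}))\equiv\varphi_{w',w''}$; (ii) $\equiv\varphi_{w,w'}$ and $\equiv\varphi_{w'}$; (iii) $\equiv\varphi_w$ and $\equiv\varphi_{w',w''}$; (iv) $\equiv\varphi_w$ and $\equiv\varphi_{w'}$. (ESF-P) for every society $N$, every $N$-profile $\Phi$ and all $E,E'$: if $\bigwedge_{i\in N}B(\nabla(E_i,E))\nvdash\bot$ and $B(\nabla(E_i,E))\wedge B(E')\vdash\bot$ for all $i\in N$, then $B(\nabla(\Phi,E))\wedge B(E')\vdash\bot$.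 (ESF-I) for every society $N$, all $N$-profiles $\Phi,\Phi'$ and every $E$: if for every $E'$ with $B(E')\vdash B(E)$ one has $B(\nabla(E_j,E'))\equiv B(\nabla(E'_j,E'))$ for all $j\in N$, then $B(\nabla(\Phi,E))\equiv B(\nabla(\Phi',E))$. (ESF-D) for every society $N$ there exists $d_N\in N$ such that for every $N$-profile $\Phi$ and every $E$, $B(\nabla(\Phi,E))\vdash B(\nabla(E_{d_N},E))$. *)

From mathcomp Require Import all_boot.
From Stdlib Require Import List Sorted.

Set Implicit Arguments.
Unset Strict Implicit.
Unset Printing Implicit Defensive.

Inductive form (P : Type) : Type :=
  | FVar of P
  | FTop
  | FBot
  | FNot of form P
  | FAnd of form P & form P
  | FOr of form P & form P
  | FImp of form P & form P.

Definition valuation (P : finType) := {ffun P -> bool}.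

Fixpoint sat (P : finType) (w : valuation P) (f : form P) : bool :=
  match f with
  | FVar p => w p
  | FTop => true
  | FBot => false
  | FNot g => ~~ sat w g
  | FAnd g h => sat w g && sat w h
  | FOr g h => sat w g || sat w h
  | FImp g h => sat w g ==> sat w h
  end.

Definition entails (P : finType) (f g : form P) : Prop :=
  forall w : valuation P, sat w f -> sat w g.
Definition fequiv (P : finType) (f g : form P) : Prop :=
  entails f g /\ entails g f.
Definition consistent (P : finType) (f : form P) : Prop :=
  exists w : valuation P, sat w f.
Definition models_are (P : finType) (f : form P) (M : valuation P -> Prop) : Prop :=
  forall w, sat w f <-> M w.

Definition epistemic_space (P : finType) (E : Type) (B : E -> form P) : Prop :=
  inhabited E /\
  (forall e, consistent (B e)) /\
  (forall f : form P, consistent f -> exists e, fequiv (B e) f).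

Definition strict_well_order (S : Type) (lt : S -> S -> Prop) : Prop :=
  well_founded lt /\
  (forall x y z, lt x y -> lt y z -> lt x z) /\
  (forall x, ~ lt x x) /\
  (forall x y, lt x y \/ x = y \/ lt y x).

(* A society N = {i_1 < ... < i_n} is represented by the strictly increasing
   nonempty list of its members. *)
Definition is_society (S : Type) (lt : S -> S -> Prop) (N : list S) : Prop :=
  N <> nil /\ Sorted lt N.

(* A profile Phi : N -> E is represented by the list [(i_1,E_{i_1}); ...;
   (i_n,E_{i_n})], strictly increasing in the agents; its society is map fst. *)
Definition is_profile (S E : Type) (lt : S -> S -> Prop) (l : list (S * E)) : Prop :=
  l <> nil /\ Sorted (fun a b => lt (fst a) (fst b)) l.

Definition is_N_profile (S E : Type) (lt : S -> S -> Prop) (N : list S)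
  (l : list (S * E)) : Prop :=
  is_profile lt l /\ map fst l = N.

(* Phi == Psi : same size and Phi(i_k) = Psi(j_k) for all k *)
Definition prof_equiv (S E : Type) (l1 l2 : list (S * E)) : Prop :=
  map snd l1 = map snd l2.

Definition single (S E : Type) (i : S) (e : E) : list (S * E) := (i, e) :: nil.

(* An ES combination operator: nabla : profiles -> E -> E
   (values on lists that are not profiles are irrelevant). *)
Definition combination (S E : Type) := list (S * E) -> E -> E.

Definition ES_basic_fusion (P : finType) (S E : Type) (lt : S -> S -> Prop)
  (B : E -> form P) (nabla : combination S E) : Prop :=
  (forall Phi e, is_profile lt Phi -> entails (B (nabla Phi e)) (B e)) /\
  (forall Phi Phi' e e', is_profile lt Phi -> is_profile lt Phi' ->
     prof_equiv Phi Phi' -> fequiv (B e) (B e') ->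
     fequiv (B (nabla Phi e)) (B (nabla Phi' e'))) /\
  (forall Phi e e' e'', is_profile lt Phi ->
     fequiv (B e) (FAnd (B e') (B e'')) ->
     entails (FAnd (B (nabla Phi e')) (B e'')) (B (nabla Phi e))) /\
  (forall Phi e e' e'', is_profile lt Phi ->
     fequiv (B e) (FAnd (B e') (B e'')) ->
     consistent (FAnd (B (nabla Phi e')) (B e'')) ->
     entails (B (nabla Phi e)) (FAnd (B (nabla Phi e')) (B e''))).

Definition ESF_SD (P : finType) (S E : Type)
  (B : E -> form P) (nabla : combination S E) : Prop :=
  forall (i : S) (w w' w'' : valuation P),
    w <> w' -> w' <> w'' -> w <> w'' ->
    forall Eww' Ew'w'' : E,
      models_are (B Eww') (fun v => v = w \/ v = w') ->
      models_are (B Ew'w'') (fun v => v = w' \/ v = w'') ->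
      (exists Ei, models_are (B (nabla (single i Ei) Eww')) (fun v => v = w \/ v = w') /\
                  models_are (B (nabla (single i Ei) Ew'w'')) (fun v => v = w' \/ v = w'')) /\
      (exists Ei, models_are (B (nabla (single i Ei) Eww')) (fun v => v = w \/ v = w') /\
                  models_are (B (nabla (single i Ei) Ew'w'')) (fun v => v = w')) /\
      (exists Ei, models_are (B (nabla (single i Ei) Eww')) (fun v => v = w) /\
                  models_are (B (nabla (single i Ei) Ew'w'')) (fun v => v = w' \/ v = w'')) /\
      (exists Ei, models_are (B (nabla (single i Ei) Eww')) (fun v => v = w) /\
                  models_are (B (nabla (single i Ei) Ew'w'')) (fun v => v = w')).

Definition ESF_P (P : finType) (S E : Type) (lt : S -> S -> Prop)
  (B : E -> form P) (nabla : combination S E) : Prop :=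
  forall (N : list S) (Phi : list (S * E)) (e e' : E),
    is_society lt N -> is_N_profile lt N Phi ->
    (exists w : valuation P, forall i ei, In (i, ei) Phi -> sat w (B (nabla (single i ei) e))) ->
    (forall i ei, In (i, ei) Phi ->
       ~ consistent (FAnd (B (nabla (single i ei) e)) (B e'))) ->
    ~ consistent (FAnd (B (nabla Phi e)) (B e')).

Definition ESF_I (P : finType) (S E : Type) (lt : S -> S -> Prop)
  (B : E -> form P) (nabla : combination S E) : Prop :=
  forall (N : list S) (Phi Phi' : list (S * E)) (e : E),
    is_society lt N -> is_N_profile lt N Phi -> is_N_profile lt N Phi' ->
    (forall e' : E, entails (B e') (B e) ->
       forall j ej ej', In (j, ej) Phi -> In (j, ej') Phi' ->
         fequiv (B (nabla (single j ej) e')) (B (nabla (single j ej') e'))) ->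
    fequiv (B (nabla Phi e)) (B (nabla Phi' e)).

Definition ESF_D (P : finType) (S E : Type) (lt : S -> S -> Prop)
  (B : E -> form P) (nabla : combination S E) : Prop :=
  forall N : list S, is_society lt N ->
    exists d : S, In d N /\
      forall (Phi : list (S * E)) (e : E), is_N_profile lt N Phi ->
        forall ed : E, In (d, ed) Phi ->
          entails (B (nabla Phi e)) (B (nabla (single d ed) e)).

From mathcomp Require Import all_boot.
From Stdlib Require Import List Sorted Classical ClassicalEpsilon.

(* Write [pref Phi x y] when [x] survives the fusion of [Phi] on a state with models {x, y}.
   ESF1-ESF4 make [pref Phi] a total preorder on valuations, and fusion on any state keeps
   exactly its maximal models. ESF-SD lets a single agent hold any strict order of three
   valuations, ESF-P is weak Pareto and ESF-I is independence of irrelevant alternatives for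
   [pref]; as there are at least three valuations, Arrow's argument (expansion of a decisive
   pair to all pairs, then splitting decisive coalitions) produces a dictator for [pref].
   Since fusion selects maximal models, dictatorship for [pref] is dictatorship for fusion. *)

Set Implicit Arguments.
Unset Strict Implicit.

Lemma Sorted_map_homo (A C : Type) (R : A -> A -> Prop) (R' : C -> C -> Prop) (f : A -> C) l :
  (forall a b, R a b -> R' (f a) (f b)) -> Sorted R l -> Sorted R' (map f l).
Proof.
move=> f_homo; elim=> [|a {}l _ IH a_l] /=; constructor => //.
by case: a_l => [|b l' ab] /=; constructor; apply: f_homo.
Qed.

Section Valuations.
Variable P : finType.

Definition charf (w : valuation P) : form P :=
  foldr (fun p f => FAnd (if w p then FVar p else FNot (FVar p)) f) (@FTop P) (enum P).

Lemma sat_charf v w : sat v (charf w) = (v == w).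
Proof.
have sat_foldr s : sat v (foldr (fun p f => FAnd (if w p then FVar p else FNot (FVar p)) f)
                               (@FTop P) s) = all (fun p => v p == w p) s.
  elim: s => [|p s IH] //=; rewrite IH.
  by case: (w p) => /=; case: (v p).
rewrite /charf sat_foldr; apply/allP/eqP => [eq_vw | -> //].
by apply/ffunP=> p; apply/eqP/eq_vw; rewrite mem_enum.
Qed.

Lemma valuation_avoid2 (a b : valuation P) :
  (1 < #|P|)%N -> exists c : valuation P, c != a /\ c != b.
Proof.
move=> P2; case: (pickP (fun c : valuation P => (c != a) && (c != b))) => [c /andP [] | none].
  by exists c.
have : (2 ^ 2 <= #|[set a; b]|)%N.
  apply: leq_trans (_ : 2 ^ 2 <= 2 ^ #|P|)%N _; first by rewrite leq_exp2l.
  rewrite -[2]card_bool -card_ffun subset_leq_card //.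
  by apply/subsetP => c _; move: (none c); rewrite !inE; case: (c == a); case: (c == b).
by rewrite cards2; case: (a != b).
Qed.

Lemma valuation_triple : (1 < #|P|)%N ->
  exists x y z : valuation P, [/\ x != y, y != z & x != z].
Proof.
move=> P2; have [x _] := valuation_avoid2 [ffun=> true] [ffun=> true] P2.
have [y [yx _]] := valuation_avoid2 x x P2.
have [z [zx zy]] := valuation_avoid2 x y P2.
by exists x, y, z; split; rewrite eq_sym.
Qed.

End Valuations.

Section Fusion.
Variables (P : finType) (E : Type) (B : E -> form P) (S : Type)
  (lt : S -> S -> Prop) (nabla : combination S E).
Hypothesis HES : epistemic_space B.
Hypothesis HP : (1 < #|P|)%N.
Hypothesis Hwo : strict_well_order lt.
Hypothesis HF : ES_basic_fusion lt B nabla.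
Hypothesis HSD : ESF_SD B nabla.
Hypothesis HPar : ESF_P lt B nabla.
Hypothesis HI : ESF_I lt B nabla.

Local Notation W := (valuation P).

Let inhE : inhabited E := proj1 HES.

Definition state_of (f : form P) : E := epsilon inhE (fun e => fequiv (B e) f).

Lemma sat_state_of f : consistent f -> forall v, sat v (B (state_of f)) = sat v f.
Proof.
move=> f_cons v.
have [] := epsilon_spec inhE (fun e => fequiv (B e) f) (proj2 (proj2 HES) f f_cons).
by move=> sub sup; apply/idP/idP; [apply: sub | apply: sup].
Qed.

Definition point_state (x : W) := state_of (charf x).
Definition pair_state (x y : W) := state_of (FOr (charf x) (charf y)).
Definition triple_state (x y z : W) := state_of (FOr (FOr (charf x) (charf y)) (charf z)).

Lemma sat_point_state x v : sat v (B (point_state x)) = (v == x).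
Proof. by rewrite sat_state_of ?sat_charf //; exists x; rewrite sat_charf. Qed.

Lemma sat_pair_state x y v : sat v (B (pair_state x y)) = (v == x) || (v == y).
Proof. by rewrite sat_state_of /= ?sat_charf //; exists x; rewrite /= !sat_charf eqxx. Qed.

Lemma sat_triple_state x y z v :
  sat v (B (triple_state x y z)) = [|| v == x, v == y | v == z].
Proof. by rewrite sat_state_of /= ?sat_charf ?orbA //; exists x; rewrite /= !sat_charf eqxx. Qed.

Lemma B_consistent e : exists v, sat v (B e).
Proof. exact: (proj1 (proj2 HES) e). Qed.

Lemma nabla_sub Phi e v : is_profile lt Phi -> sat v (B (nabla Phi e)) -> sat v (B e).
Proof. by move=> Phi_prof; apply: (proj1 HF Phi e Phi_prof). Qed.

Lemma nabla_ext Phi Phi' e e' :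
  is_profile lt Phi -> is_profile lt Phi' -> prof_equiv Phi Phi' ->
  (forall v, sat v (B e) = sat v (B e')) ->
  forall v, sat v (B (nabla Phi e)) = sat v (B (nabla Phi' e')).
Proof.
move=> Phi_prof Phi'_prof equiv_Phi eq_e v.
have e_equiv : fequiv (B e) (B e') by split=> u; rewrite eq_e.
have [sub sup] := proj1 (proj2 HF) Phi Phi' e e' Phi_prof Phi'_prof equiv_Phi e_equiv.
by apply/idP/idP; [apply: sub | apply: sup].
Qed.

(* ESF3 and ESF4 with [E'' := e], since [B e] is equivalent to [B e' /\ B e]. *)
Lemma nabla_restrict Phi e e' w : is_profile lt Phi ->
  (forall v, sat v (B e) -> sat v (B e')) ->
  sat w (B (nabla Phi e')) -> sat w (B e) ->
  forall v, sat v (B (nabla Phi e)) = sat v (B (nabla Phi e')) && sat v (B e).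
Proof.
move=> Phi_prof sub_e w_e' w_e v.
have [_ [_ [F3 F4]]] := HF.
have e_meet : fequiv (B e) (FAnd (B e') (B e)).
  by split=> u /=; [move=> h; rewrite h (sub_e u h) | case/andP].
apply/idP/idP => [h | h]; last exact: (F3 Phi e e' e Phi_prof e_meet v).
apply: (F4 Phi e e' e Phi_prof e_meet _ v h).
by exists w; rewrite /= w_e' w_e.
Qed.

Definition pref Phi x y := sat x (B (nabla Phi (pair_state x y))).
Definition spref Phi x y := ~~ pref Phi y x.

Lemma pref_swap Phi x y : is_profile lt Phi ->
  sat y (B (nabla Phi (pair_state x y))) = pref Phi y x.
Proof. by move=> Phi_prof; apply: nabla_ext => // v; rewrite !sat_pair_state orbC. Qed.

Lemma sat_nabla_pair Phi x y v : is_profile lt Phi ->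
  sat v (B (nabla Phi (pair_state x y))) =
  ((v == x) && pref Phi x y) || ((v == y) && pref Phi y x).
Proof.
move=> Phi_prof; have [-> | vx] := eqVneq v x.
  by case: (eqVneq x y) => [<- | _]; rewrite /pref ?orbb ?orbF.
have [-> | vy] := eqVneq v y; first by rewrite pref_swap.
apply/negP => /(nabla_sub Phi_prof).
by rewrite sat_pair_state (negbTE vx) (negbTE vy).
Qed.

Lemma pref_total Phi x y : is_profile lt Phi -> pref Phi x y || pref Phi y x.
Proof.
move=> Phi_prof; have [v] := B_consistent (nabla Phi (pair_state x y)).
by rewrite sat_nabla_pair // => /orP [] /andP [_ ->]; rewrite ?orbT.
Qed.

Lemma pref_trans Phi x y z : is_profile lt Phi ->
  pref Phi x y -> pref Phi y z -> pref Phi x z.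
Proof.
move=> Phi_prof xy yz; set T := triple_state x y z.
have in_T a b : [|| a == x, a == y | a == z] -> [|| b == x, b == y | b == z] ->
    sat a (B (nabla Phi T)) || sat b (B (nabla Phi T)) ->
    forall v, sat v (B (nabla Phi (pair_state a b))) =
              sat v (B (nabla Phi T)) && ((v == a) || (v == b)).
  move=> ha hb hab v; rewrite -sat_pair_state.
  have sub u : sat u (B (pair_state a b)) -> sat u (B T).
    by rewrite sat_pair_state sat_triple_state => /orP [] /eqP ->.
  case/orP: hab => hab.
  - by apply: (nabla_restrict (w := a)); rewrite ?sat_pair_state ?eqxx.
  - by apply: (nabla_restrict (w := b)); rewrite ?sat_pair_state ?eqxx ?orbT.
have [c c_T] := B_consistent (nabla Phi T).
have x_T : sat x (B (nabla Phi T)) -> pref Phi x z.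
  by move=> h; rewrite /pref in_T ?eqxx ?h ?orbT.
have y_T : sat y (B (nabla Phi T)) -> sat x (B (nabla Phi T)).
  by move=> h; move: xy; rewrite /pref in_T ?eqxx ?h ?orbT // => /andP [].
have z_T : sat z (B (nabla Phi T)) -> sat y (B (nabla Phi T)).
  by move=> h; move: yz; rewrite /pref in_T ?eqxx ?h ?orbT // => /andP [].
move: (nabla_sub Phi_prof c_T); rewrite sat_triple_state.
by case/or3P => /eqP c_eq; subst c; auto.
Qed.

Lemma spref_pref Phi x y : is_profile lt Phi -> spref Phi x y -> pref Phi x y.
Proof.
by move=> /(pref_total x y); rewrite /spref; case: (pref Phi x y); case: (pref Phi y x).
Qed.

Lemma spref_prefs Phi x y : is_profile lt Phi ->
  spref Phi x y -> pref Phi x y = true /\ pref Phi y x = false.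
Proof. by move=> Phi_prof xy; rewrite (spref_pref Phi_prof xy) (negbTE xy). Qed.

Lemma pref_spref_trans Phi x y z : is_profile lt Phi ->
  pref Phi x y -> spref Phi y z -> spref Phi x z.
Proof. by move=> Phi_prof xy yz; apply: contra yz => /pref_trans; apply. Qed.

Lemma spref_pref_trans Phi x y z : is_profile lt Phi ->
  spref Phi x y -> pref Phi y z -> spref Phi x z.
Proof. by move=> Phi_prof xy yz; apply: contra xy; apply: pref_trans. Qed.

Lemma spref_trans Phi x y z : is_profile lt Phi ->
  spref Phi x y -> spref Phi y z -> spref Phi x z.
Proof. by move=> Phi_prof xy /(spref_pref Phi_prof); apply: spref_pref_trans. Qed.

Lemma single_profile (i : S) (e : E) : is_profile lt (single i e).
Proof. by split; repeat constructor. Qed.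

Lemma pref_single_agent i j e x y : pref (single i e) x y = pref (single j e) x y.
Proof. by apply: nabla_ext => //; apply: single_profile. Qed.

Lemma models_are_point (f : form P) a :
  models_are f (fun v => v = a) -> forall v, sat v f = (v == a).
Proof. by move=> f_a v; apply/idP/eqP => [/f_a | /f_a]. Qed.

Lemma models_are_pair (f : form P) a b :
  models_are f (fun v => v = a \/ v = b) -> forall v, sat v f = (v == a) || (v == b).
Proof.
move=> f_ab v; apply/idP/orP => [/f_ab [] -> | [] /eqP ->]; rewrite ?eqxx; auto.
all: by apply/f_ab; auto.
Qed.

Lemma models_are_pair_state a b : models_are (B (pair_state a b)) (fun v => v = a \/ v = b).
Proof.
move=> v; rewrite sat_pair_state.
by split => [/orP [] /eqP -> | [] ->]; rewrite ?eqxx ?orbT; auto.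
Qed.

Lemma single_pattern_models (i : S) w w' w'' (b1 b2 : bool) :
  w != w' -> w' != w'' -> w != w'' ->
  exists Ei,
    (forall v, sat v (B (nabla (single i Ei) (pair_state w w'))) = (v == w) || b1 && (v == w')) /\
    (forall v, sat v (B (nabla (single i Ei) (pair_state w' w''))) = (v == w') || b2 && (v == w'')).
Proof.
move=> /eqP ww' /eqP w'w'' /eqP ww''.
have [[E1 [h1 h2]] [[E2 [h3 h4]] [[E3 [h5 h6]] [E4 [h7 h8]]]]] :=
  HSD i ww' w'w'' ww'' (models_are_pair_state w w') (models_are_pair_state w' w'').
case: b1; case: b2.
- by exists E1; split=> v; rewrite ?(models_are_pair h1) ?(models_are_pair h2).
- by exists E2; split=> v; rewrite ?(models_are_pair h3) ?(models_are_point h4) ?orbF.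
- by exists E3; split=> v; rewrite ?(models_are_point h5) ?(models_are_pair h6) ?orbF.
- by exists E4; split=> v; rewrite ?(models_are_point h7) ?(models_are_point h8) ?orbF.
Qed.

Lemma single_pattern (i0 : S) w w' w'' (b1 b2 : bool) :
  w != w' -> w' != w'' -> w != w'' ->
  exists Ei, forall i, [/\ pref (single i Ei) w w', pref (single i Ei) w' w = b1,
                           pref (single i Ei) w' w'' & pref (single i Ei) w'' w' = b2].
Proof.
move=> ww' w'w'' ww''.
have [Ei [first second]] := single_pattern_models i0 b1 b2 ww' w'w'' ww''.
exists Ei => i; rewrite !(pref_single_agent i i0).
have Ei_prof := single_profile i0 Ei.
rewrite -(pref_swap w w' Ei_prof) -(pref_swap w' w'' Ei_prof).
by rewrite /pref !first !second !eqxx !andbT (eq_sym w') (negbTE ww') (eq_sym w'') (negbTE w'w'').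
Qed.

Lemma single_chain (i0 : S) u v w : u != v -> v != w -> u != w ->
  exists Ei, forall i, [/\ spref (single i Ei) u v, spref (single i Ei) v w
                         & spref (single i Ei) u w].
Proof.
move=> uv vw uw; have [Ei pat] := single_pattern i0 false false uv vw uw.
exists Ei => i; have [_ vu _ wv] := pat i.
have uv_lt : spref (single i Ei) u v by rewrite /spref vu.
have vw_lt : spref (single i Ei) v w by rewrite /spref wv.
by split => //; apply: spref_trans uv_lt vw_lt; apply: single_profile.
Qed.

Definition agree_on (Phi Phi' : list (S * E)) x y :=
  pref Phi x y = pref Phi' x y /\ pref Phi y x = pref Phi' y x.

Lemma agree_on_spref Phi Phi' x y : is_profile lt Phi -> is_profile lt Phi' ->
  spref Phi x y -> spref Phi' x y -> agree_on Phi Phi' x y.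
Proof.
move=> Phi_prof Phi'_prof xy xy'.
rewrite /agree_on; have [-> ->] := spref_prefs Phi_prof xy.
by have [-> ->] := spref_prefs Phi'_prof xy'.
Qed.

Lemma recomparing_fun (i0 : S) (R : E -> Prop) u w :
  (forall l1 l2 : bool, l1 || l2 ->
     exists Ei, R Ei /\ forall i, pref (single i Ei) u w = l1 /\ pref (single i Ei) w u = l2) ->
  exists f : E -> E, forall e, R (f e) /\ forall i, agree_on (single i (f e)) (single i e) u w.
Proof.
move=> realise.
have [Ett [Rtt tt]] := realise true true isT.
have [Etf [Rtf tf]] := realise true false isT.
have [Eft [Rft ft]] := realise false true isT.
exists (fun e => if pref (single i0 e) u w then if pref (single i0 e) w u then Ett else Etf
                 else Eft) => e.
have := pref_total u w (single_profile i0 e).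
case uw: (pref (single i0 e) u w); case wu: (pref (single i0 e) w u) => //= _;
  split => // i; rewrite /agree_on !(pref_single_agent i i0 e) uw wu.
- by have [] := tt i.
- by have [] := tf i.
- by have [] := ft i.
Qed.

Lemma single_below (i0 : S) v u w : v != u -> u != w -> v != w ->
  exists f : E -> E, forall e,
    (forall i, spref (single i (f e)) v u /\ spref (single i (f e)) v w) /\
    forall i, agree_on (single i (f e)) (single i e) u w.
Proof.
move=> vu uw vw.
apply: (recomparing_fun i0 (R := fun e' => forall i,
  spref (single i e') v u /\ spref (single i e') v w)) => - [] [] // _.
- have [Ei pat] := single_pattern i0 false true vu uw vw.
  exists Ei; split=> i; have [_ uv_le uw_le wu_le] := pat i; last by split.
  have vu_lt : spref (single i Ei) v u by rewrite /spref uv_le.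
  by split => //; apply: spref_pref_trans (single_profile i Ei) vu_lt uw_le.
- have [Ei chain] := single_chain i0 vu uw vw.
  exists Ei; split=> i; have [vu_lt uw_lt vw_lt] := chain i; first by split.
  exact: spref_prefs (single_profile i Ei) uw_lt.
- rewrite eq_sym in uw; have [Ei chain] := single_chain i0 vw uw vu.
  exists Ei; split=> i; have [vw_lt wu_lt vu_lt] := chain i; first by split.
  by have [-> ->] := spref_prefs (single_profile i Ei) wu_lt.
Qed.

Lemma single_above (i0 : S) v u w : v != u -> u != w -> v != w ->
  exists f : E -> E, forall e,
    (forall i, spref (single i (f e)) u v /\ spref (single i (f e)) w v) /\
    forall i, agree_on (single i (f e)) (single i e) u w.
Proof.
move=> vu uw vw; rewrite eq_sym in vu; rewrite eq_sym in vw.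
apply: (recomparing_fun i0 (R := fun e' => forall i,
  spref (single i e') u v /\ spref (single i e') w v)) => - [] [] // _.
- have [Ei pat] := single_pattern i0 true false uw vw vu.
  exists Ei; split=> i; have [uw_le wu_le _ vw_le] := pat i; last by split.
  have wv_lt : spref (single i Ei) w v by rewrite /spref vw_le.
  by split => //; apply: pref_spref_trans (single_profile i Ei) uw_le wv_lt.
- have [Ei chain] := single_chain i0 uw vw vu.
  exists Ei; split=> i; have [uw_lt wv_lt uv_lt] := chain i; first by split.
  exact: spref_prefs (single_profile i Ei) uw_lt.
- rewrite eq_sym in uw; have [Ei chain] := single_chain i0 uw vu vw.
  exists Ei; split=> i; have [wu_lt uv_lt wv_lt] := chain i; first by split.
  by have [-> ->] := spref_prefs (single_profile i Ei) wu_lt.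
Qed.

Definition profile_of (N : list S) (h : S -> E) := map (fun i => (i, h i)) N.
Definition remap (g : S -> E -> E) (Phi : list (S * E)) := map (fun pr => (pr.1, g pr.1 pr.2)) Phi.

Lemma profile_of_N_profile N h : is_society lt N -> is_N_profile lt N (profile_of N h).
Proof.
move=> [N_nil N_sorted]; split; first split.
- by case: N N_nil {N_sorted}.
- exact: (Sorted_map_homo (R := lt)).
- by elim: N {N_nil N_sorted} => //= a l ->.
Qed.

Lemma remap_N_profile N Phi g : is_N_profile lt N Phi -> is_N_profile lt N (remap g Phi).
Proof.
move=> [[Phi_nil Phi_sorted] <-]; split; first split.
- by case: Phi Phi_nil {Phi_sorted}.
- exact: (Sorted_map_homo (R := fun a b => lt a.1 b.1)).
- by elim: Phi {Phi_nil Phi_sorted} => //= a l ->.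
Qed.

Lemma in_profile_of N h j e : In (j, e) (profile_of N h) -> e = h j.
Proof. by case/in_map_iff => a [[<- <-]]. Qed.

Lemma in_remap Phi g j e : In (j, e) (remap g Phi) -> exists2 ej, In (j, ej) Phi & e = g j ej.
Proof. by case/in_map_iff => [[a b] [[<- <-] ?]]; exists b. Qed.

Lemma in_N_profile N Phi i (e : E) : is_N_profile lt N Phi -> In (i, e) Phi -> In i N.
Proof. by move=> [_ <-]; apply: (List.in_map fst Phi (i, e)). Qed.

Lemma profile_functional Phi j (e1 e2 : E) :
  is_profile lt Phi -> In (j, e1) Phi -> In (j, e2) Phi -> e1 = e2.
Proof.
move=> [_ Phi_sorted]; have [_ [lt_trans [lt_irr _]]] := Hwo.
have : StronglySorted (fun a b : S * E => lt a.1 b.1) Phi.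
  by apply: Sorted_StronglySorted => // a b c; apply: lt_trans.
elim=> {Phi Phi_sorted} // a Phi _ IH /Forall_forall a_lt /= [a_e1 | in1] [a_e2 | in2].
- by move: a_e2; rewrite a_e1 => -[].
- by subst a; case: (lt_irr j (a_lt _ in2)).
- by subst a; case: (lt_irr j (a_lt _ in1)).
- exact: IH.
Qed.

Lemma society_nonempty N : is_society lt N -> exists i, In i N.
Proof. by case: N => [[] // | a l _]; exists a; left. Qed.

Lemma sat_nabla_point Phi e c : is_profile lt Phi ->
  (forall v, sat v (B e) = (v == c)) -> forall v, sat v (B (nabla Phi e)) = (v == c).
Proof.
move=> Phi_prof e_c v; apply/idP/eqP => [/(nabla_sub Phi_prof) | ->].
  by rewrite e_c => /eqP.
have [u u_nabla] := B_consistent (nabla Phi e).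
have /eqP <- : u == c by rewrite -e_c; apply: nabla_sub Phi_prof u_nabla.
exact: u_nabla.
Qed.

Lemma nabla_agree_on Phi Phi' e p q : is_profile lt Phi -> is_profile lt Phi' ->
  (forall v, sat v (B e) -> (v == p) || (v == q)) -> agree_on Phi Phi' p q ->
  forall v, sat v (B (nabla Phi e)) = sat v (B (nabla Phi' e)).
Proof.
move=> Phi_prof Phi'_prof e_pq [pq qp] v.
have e_point c : (forall u, sat u (B e) = (u == c)) ->
    sat v (B (nabla Phi e)) = sat v (B (nabla Phi' e)).
  by move=> e_c; rewrite !(sat_nabla_point _ e_c).
case p_e: (sat p (B e)); case q_e: (sat q (B e)).
- have e_pair u : sat u (B (pair_state p q)) = sat u (B e).
    by rewrite sat_pair_state; apply/idP/idP => [/orP [] /eqP -> | /e_pq].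
  rewrite -(nabla_ext Phi_prof Phi_prof erefl e_pair).
  rewrite -(nabla_ext Phi'_prof Phi'_prof erefl e_pair).
  by rewrite !sat_nabla_pair // pq qp.
- apply: (e_point p) => u; apply/idP/eqP => [u_e | -> //].
  by case/orP: (e_pq u u_e) => /eqP // u_q; move: q_e; rewrite -u_q u_e.
- apply: (e_point q) => u; apply/idP/eqP => [u_e | -> //].
  by case/orP: (e_pq u u_e) => /eqP // u_p; move: p_e; rewrite -u_p u_e.
- have [u u_e] := B_consistent e.
  by case/orP: (e_pq u u_e) => /eqP u_eq; move: u_e; rewrite u_eq ?p_e ?q_e.
Qed.

Lemma pref_iia N Phi Phi' p q :
  is_society lt N -> is_N_profile lt N Phi -> is_N_profile lt N Phi' ->
  (forall j ej ej', In (j, ej) Phi -> In (j, ej') Phi' ->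
     agree_on (single j ej) (single j ej') p q) ->
  pref Phi p q = pref Phi' p q.
Proof.
move=> N_soc Phi_prof Phi'_prof agree.
have [sub sup] : fequiv (B (nabla Phi (pair_state p q))) (B (nabla Phi' (pair_state p q))).
  apply: HI N_soc Phi_prof Phi'_prof _ => e' e'_pq j ej ej' in_Phi in_Phi'.
  have e'_sub v : sat v (B e') -> (v == p) || (v == q) by rewrite -sat_pair_state; apply: e'_pq.
  have same := nabla_agree_on (single_profile j ej) (single_profile j ej') e'_sub
                 (agree j ej ej' in_Phi in_Phi').
  by split=> v; rewrite same.
by apply/idP/idP; [apply: sub | apply: sup].
Qed.

Lemma spref_pareto N Phi x y : is_society lt N -> is_N_profile lt N Phi -> x != y ->
  (forall i ei, In (i, ei) Phi -> spref (single i ei) x y) -> spref Phi x y.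
Proof.
move=> N_soc Phi_prof xy all_xy; apply/negP => yx.
apply: (HPar (e := pair_state x y) (e' := point_state y) N_soc Phi_prof).
- exists x => i ei in_Phi.
  exact: (spref_pref (single_profile i ei) (all_xy i ei in_Phi)).
- move=> i ei in_Phi [v] /= /andP [v_nabla]; rewrite sat_point_state => /eqP v_y.
  move: v_nabla; rewrite v_y pref_swap; last exact: single_profile.
  exact/negP/all_xy.
- by exists y; rewrite /= sat_point_state eqxx andbT pref_swap //; case: Phi_prof.
Qed.

Lemma agree_onC Phi Phi' x y : agree_on Phi Phi' x y -> agree_on Phi Phi' y x.
Proof. by case. Qed.

Lemma agree_on_sym Phi Phi' x y : agree_on Phi Phi' x y -> agree_on Phi' Phi x y.
Proof. by case. Qed.

Definition decisive_over N (G : S -> Prop) a b := forall Phi, is_N_profile lt N Phi ->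
  (forall i ei, In (i, ei) Phi -> G i -> spref (single i ei) a b) -> spref Phi a b.

Definition weakly_decisive_over N (G : S -> Prop) a b := forall Phi, is_N_profile lt N Phi ->
  (forall i ei, In (i, ei) Phi ->
     (G i -> spref (single i ei) a b) /\ (~ G i -> spref (single i ei) b a)) ->
  spref Phi a b.

Definition decisive N (G : S -> Prop) := forall a b, a != b -> decisive_over N G a b.

Lemma decisive_over_weakly N G a b : decisive_over N G a b -> weakly_decisive_over N G a b.
Proof. by move=> dec Phi Phi_prof G_ab; apply: dec Phi_prof _ => i ei /G_ab []. Qed.

Definition coalition_remap (G : S -> Prop) (Ein : E) (f : E -> E) (i : S) (ei : E) :=
  if excluded_middle_informative (G i) then Ein else f ei.

Lemma decisive_over_of_remap N G a b Ein f : is_society lt N ->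
  (forall i, spref (single i Ein) a b) ->
  (forall e i, agree_on (single i (f e)) (single i e) a b) ->
  (forall Phi, is_N_profile lt N Phi -> spref (remap (coalition_remap G Ein f) Phi) a b) ->
  decisive_over N G a b.
Proof.
move=> N_soc Ein_ab f_agree remap_ab Phi Phi_prof G_ab.
rewrite /spref (pref_iia N_soc Phi_prof (remap_N_profile (coalition_remap G Ein f) Phi_prof)).
  exact: remap_ab.
move=> j ej ej' in_Phi /in_remap [ej2 in_Phi2 ->].
rewrite -(profile_functional (proj1 Phi_prof) in_Phi in_Phi2) /coalition_remap.
apply: agree_onC; case: excluded_middle_informative => Gj.
- exact: agree_on_spref (single_profile _ _) (single_profile _ _) (G_ab j ej in_Phi Gj) (Ein_ab j).
- exact/agree_on_sym/f_agree.
Qed.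

(* Members of [G] are given [x < y < b], the others keep their comparison of [x] and [b]
   but put [y] below both: then [x < y] by weak decisiveness and [y < b] by Pareto. *)
Lemma decisive_right_of_weak N G x y b : is_society lt N ->
  x != y -> b != x -> b != y -> weakly_decisive_over N G x y -> decisive_over N G x b.
Proof.
move=> N_soc xy bx b_y weak.
have yb : y != b by rewrite eq_sym.
have xb : x != b by rewrite eq_sym.
have yx : y != x by rewrite eq_sym.
have [i0 _] := society_nonempty N_soc.
have [Ein chain] := single_chain i0 xy yb xb.
have [f f_spec] := single_below i0 yx xb yb.
apply: (decisive_over_of_remap (Ein := Ein) (f := f)) => // [i | e i | Phi Phi_prof].
- by case: (chain i).
- by case: (f_spec e) => _.
set Phi' := remap _ Phi; have Phi'_prof := remap_N_profile (coalition_remap G Ein f) Phi_prof.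
have xy_Phi' : spref Phi' x y.
  apply: (weak _ Phi'_prof) => i e' /in_remap [e _ ->]; rewrite /coalition_remap.
  case: excluded_middle_informative => Gi; split => // _; first by case: (chain i).
  by have [/(_ i) []] := f_spec e.
have yb_Phi' : spref Phi' y b.
  apply: (spref_pareto N_soc Phi'_prof yb) => i e' /in_remap [e _ ->]; rewrite /coalition_remap.
  by case: excluded_middle_informative => Gi; [case: (chain i) | have [/(_ i) []] := f_spec e].
exact: spref_trans (proj1 Phi'_prof) xy_Phi' yb_Phi'.
Qed.

(* Dually, [a < x < y] inside [G], and [x] on top of [a] and [y] outside. *)
Lemma decisive_left_of_weak N G x y a : is_society lt N ->
  x != y -> a != x -> a != y -> weakly_decisive_over N G x y -> decisive_over N G a y.
Proof.
move=> N_soc xy ax ay weak.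
have xa : x != a by rewrite eq_sym.
have [i0 _] := society_nonempty N_soc.
have [Ein chain] := single_chain i0 ax xy ay.
have [f f_spec] := single_above i0 xa ay xy.
apply: (decisive_over_of_remap (Ein := Ein) (f := f)) => // [i | e i | Phi Phi_prof].
- by case: (chain i).
- by case: (f_spec e) => _.
set Phi' := remap _ Phi; have Phi'_prof := remap_N_profile (coalition_remap G Ein f) Phi_prof.
have xy_Phi' : spref Phi' x y.
  apply: (weak _ Phi'_prof) => i e' /in_remap [e _ ->]; rewrite /coalition_remap.
  case: excluded_middle_informative => Gi; split => // _; first by case: (chain i).
  by have [/(_ i) []] := f_spec e.
have ax_Phi' : spref Phi' a x.
  apply: (spref_pareto N_soc Phi'_prof ax) => i e' /in_remap [e _ ->]; rewrite /coalition_remap.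
  by case: excluded_middle_informative => Gi; [case: (chain i) | have [/(_ i) []] := f_spec e].
exact: spref_trans (proj1 Phi'_prof) ax_Phi' xy_Phi'.
Qed.

Lemma decisive_of_weak N G x y : is_society lt N ->
  x != y -> weakly_decisive_over N G x y -> decisive N G.
Proof.
move=> N_soc xy weak.
have from_x b : b != x -> decisive_over N G x b.
  move=> bx; have [-> | b_y] := eqVneq b y.
    have [z [zx zy]] := valuation_avoid2 x y HP.
    have dec_xz := decisive_right_of_weak N_soc xy zx zy weak.
    have [xz yx yz] : [/\ x != z, y != x & y != z] by split; rewrite eq_sym.
    exact: decisive_right_of_weak N_soc xz yx yz (decisive_over_weakly dec_xz).
  exact: decisive_right_of_weak N_soc xy bx b_y weak.
move=> a b ab; have [a_x | ax] := eqVneq a x.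
  by rewrite a_x; apply: from_x; rewrite eq_sym -a_x.
have xa : x != a by rewrite eq_sym.
have [-> | bx] := eqVneq b x.
  have [z [za zx]] := valuation_avoid2 a x HP.
  have [az xz] : a != z /\ x != z by split; rewrite eq_sym.
  have dec_az := decisive_left_of_weak N_soc xz ax az (decisive_over_weakly (from_x z zx)).
  exact: decisive_right_of_weak N_soc az xa xz (decisive_over_weakly dec_az).
have xb : x != b by rewrite eq_sym.
exact: decisive_left_of_weak N_soc xb ax ab (decisive_over_weakly (from_x b bx)).
Qed.

Lemma weakly_decisive_over_of_witness N G a b Phi0 :
  is_society lt N -> is_N_profile lt N Phi0 ->
  (forall i e, In (i, e) Phi0 ->
     (G i -> spref (single i e) a b) /\ (~ G i -> spref (single i e) b a)) ->
  spref Phi0 a b -> weakly_decisive_over N G a b.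
Proof.
move=> N_soc Phi0_prof Phi0_pat Phi0_ab Psi Psi_prof Psi_pat.
rewrite /spref (pref_iia N_soc Psi_prof Phi0_prof) // => j ej ej' in_Psi in_Phi0.
have [Psi_in Psi_out] := Psi_pat j ej in_Psi; have [Phi0_in Phi0_out] := Phi0_pat j ej' in_Phi0.
have [prof prof'] := (single_profile j ej, single_profile j ej').
case: (classic (G j)) => Gj.
- exact/agree_onC/(agree_on_spref prof prof' (Psi_in Gj) (Phi0_in Gj)).
- exact: agree_on_spref prof prof' (Psi_out Gj) (Phi0_out Gj).
Qed.

(* The three cyclic rotations of [x < y < z], for [G1], for [G \ G1] and for the rest, make
   either [G1] weakly decisive over [(x, z)] or [G \ G1] weakly decisive over [(z, y)]. *)
Lemma decisive_split N G G1 : is_society lt N -> decisive N G ->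
  decisive N G1 \/ decisive N (fun i => G i /\ ~ G1 i).
Proof.
move=> N_soc dec.
have [i0 _] := society_nonempty N_soc.
have [x [y [z [xy yz xz]]]] := valuation_triple HP.
have [yx zy zx] : [/\ y != x, z != y & z != x] by split; rewrite eq_sym.
have [E1 c1] := single_chain i0 xy yz xz.
have [E2 c2] := single_chain i0 zx xy zy.
have [E3 c3] := single_chain i0 yz zx yx.
pose h i := if excluded_middle_informative (G1 i) then E1
            else if excluded_middle_informative (G i) then E2 else E3.
have Phi0_prof := profile_of_N_profile h N_soc.
have xy_Phi0 : spref (profile_of N h) x y.
  apply: (dec x y xy _ Phi0_prof) => i e /in_profile_of -> Gi; rewrite /h.
  case: excluded_middle_informative => G1i; first by case: (c1 i).
  by case: excluded_middle_informative => [? | /(_ Gi) []]; case: (c2 i).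
case zx_Phi0: (pref (profile_of N h) z x).
- right; apply: (decisive_of_weak N_soc zy).
  apply: (weakly_decisive_over_of_witness N_soc Phi0_prof); last first.
    exact: pref_spref_trans (proj1 Phi0_prof) zx_Phi0 xy_Phi0.
  move=> i e /in_profile_of ->; rewrite /h.
  case: excluded_middle_informative => G1i.
    by split=> [[? /(_ G1i) []] | ?]; case: (c1 i).
  case: excluded_middle_informative => Gi.
    by split=> [? | /(_ (conj Gi G1i)) []]; case: (c2 i).
  by split=> [[/Gi []] | ?]; case: (c3 i).
- left; apply: (decisive_of_weak N_soc xz).
  apply: (weakly_decisive_over_of_witness N_soc Phi0_prof); last by rewrite /spref zx_Phi0.
  move=> i e /in_profile_of ->; rewrite /h.
  case: excluded_middle_informative => G1i; first by split=> [? | /(_ G1i) []]; case: (c1 i).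
  case: excluded_middle_informative => ?; first by split=> [/G1i [] | ?]; case: (c2 i).
  by split=> [/G1i [] | ?]; case: (c3 i).
Qed.

Lemma decisive_member N G : is_society lt N -> decisive N G -> exists2 i, In i N & G i.
Proof.
move=> N_soc dec; apply: NNPP => no_member.
have [e0] := inhE.
have Phi_prof := profile_of_N_profile (fun _ => e0) N_soc.
have vacuous a b i ei :
    In (i, ei) (profile_of N (fun _ => e0)) -> G i -> spref (single i ei) a b.
  by move=> in_Phi Gi; case: no_member; exists i; first exact: in_N_profile Phi_prof in_Phi.
have [x [y [_ [xy _ _]]]] := valuation_triple HP.
have yx : y != x by rewrite eq_sym.
have := pref_total x y (proj1 Phi_prof).
rewrite (negbTE (dec x y xy _ Phi_prof (vacuous x y))).
by rewrite (negbTE (dec y x yx _ Phi_prof (vacuous y x))).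
Qed.

Lemma decisive_singleton N : is_society lt N ->
  forall (L : list S) G, (forall i, G i -> In i L) -> decisive N G ->
  exists d, decisive N (fun i => i = d).
Proof.
move=> N_soc; elim=> [|a L IH] G G_L dec.
  by have [i _ /G_L []] := decisive_member N_soc dec.
case: (decisive_split (fun i => i = a) N_soc dec) => [dec_a | dec_rest]; first by exists a.
by apply: IH dec_rest => i [/G_L [-> | //] /(_ erefl)].
Qed.

Lemma decisive_society N : is_society lt N -> decisive N (fun i => In i N).
Proof.
move=> N_soc a b ab Phi Phi_prof all_ab.
apply: (spref_pareto N_soc Phi_prof ab) => i ei in_Phi.
exact: all_ab in_Phi (in_N_profile Phi_prof in_Phi).
Qed.

(* A model [w] of [nabla Phi e] that is missed by [nabla Phi' e] is beaten under [Phi'] by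
   any model [x] of [nabla Phi' e], as seen by restricting [e] to {x, w} (ESF3, ESF4). *)
Lemma nabla_entails_of_spref Phi Phi' e : is_profile lt Phi -> is_profile lt Phi' ->
  (forall x w, x != w -> spref Phi' x w -> spref Phi x w) ->
  entails (B (nabla Phi e)) (B (nabla Phi' e)).
Proof.
move=> Phi_prof Phi'_prof refines w w_Phi; apply: contraTT isT => w_Phi'.
have [x x_Phi'] := B_consistent (nabla Phi' e).
have xw_e v : sat v (B (pair_state x w)) -> sat v (B e).
  by rewrite sat_pair_state => /orP [] /eqP ->; apply: nabla_sub x_Phi' || apply: nabla_sub w_Phi.
have x_xw : sat x (B (pair_state x w)) by rewrite sat_pair_state eqxx.
have w_xw : sat w (B (pair_state x w)) by rewrite sat_pair_state eqxx orbT.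
have xw : x != w by apply: contraNneq w_Phi' => <-.
have xw_Phi' : spref Phi' x w.
  rewrite /spref -(pref_swap x w Phi'_prof).
  by rewrite (nabla_restrict Phi'_prof xw_e x_Phi' x_xw) (negbTE w_Phi').
move: (refines x w xw xw_Phi').
by rewrite /spref -(pref_swap x w Phi_prof) (nabla_restrict Phi_prof xw_e w_Phi w_xw) w_Phi w_xw.
Qed.

Lemma fusion_dictatorship : ESF_D lt B nabla.
Proof.
move=> N N_soc.
have [d dec_d] := decisive_singleton N_soc (fun _ => id) (decisive_society N_soc).
have [i i_N i_d] := decisive_member N_soc dec_d.
exists d; split; first by rewrite -i_d.
move=> Phi e Phi_prof ed in_Phi.
apply: nabla_entails_of_spref (proj1 Phi_prof) (single_profile d ed) _ => x w xw xw_d.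
apply: (dec_d x w xw _ Phi_prof) => j ej in_Phi' j_d; subst j.
by rewrite (profile_functional (proj1 Phi_prof) in_Phi' in_Phi).
Qed.

End Fusion.

Theorem theorem6 (P : finType) (E : Type) (B : E -> form P)
  (S : Type) (lt : S -> S -> Prop) (nabla : combination S E) :
  epistemic_space B ->
  (1 < #|P|)%N ->
  strict_well_order lt ->
  ES_basic_fusion lt B nabla ->
  ESF_SD B nabla -> ESF_P lt B nabla -> ESF_I lt B nabla ->
  ESF_D lt B nabla.
Proof. exact: fusion_dictatorship. Qed.
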